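(* For each integer $r\ge 2$, the matrix $A'_r$ is $2$-modular.
   Context: An integer matrix $A$ is $\Delta$-modular if the determinant of every $\operatorname{rank}(A)\times\operatorname{rank}(A)$ submatrix has absolute value at most $\Delta$. $D_r$ denotes the $r\times\binom r2$ matrix whose columns are all vectors in $\mathbb{Z}^r$ with exactly two nonzero entries, the first (topmost) equal to $1$ and the second equal to $-1$. $A'_r$ is the $r\times(\binom{r+2}{2}-2)$ matrix $[\,I_r\mid D_r\mid B'_r\,]$, where $B'_r$ is the $r\times(r-1)$ matrix whose first two rows consist entirely of $1$'s, and whose last $r-2$ rows are $[\,-I_{r-2}\mid \mathbf 0\,]$ (i.e., in rows $3,\dots,r$ the first $r-2$ columns form $-I_{r-2}$ and the last column is zero). *)

From HB Require Import structures.
From mathcomp Require Import all_boot all_order all_algebra.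
Set Implicit Arguments. Unset Strict Implicit. Unset Printing Implicit Defensive.
Import Order.TTheory GRing.Theory Num.Theory.
Local Open Scope ring_scope.

Definition zrank m n (A : 'M[int]_(m, n)) : nat :=
  \rank (map_mx (fun z : int => z%:~R : rat) A).

(* Submatrices are given by arbitrary row/column selection maps; rows/columns in
   a different order only change the sign of det, and repeated indices give det 0. *)
Definition Delta_modular (Delta : int) m n (A : 'M[int]_(m, n)) : Prop :=
  forall (f : 'I_(zrank A) -> 'I_m) (g : 'I_(zrank A) -> 'I_n),
    `|\det (mxsub f g A)| <= Delta.

(* index set of the columns of D_r : pairs i < j, as sorted 2-tuples *)
Definition Dpairs (r : nat) := [set t : 2.-tuple 'I_r | sorted ltn (map val t)].

Definition Dpair (r : nat) (k : 'I_'C(r, 2)) : 2.-tuple 'I_r :=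
  enum_val (cast_ord (esym (card_ltn_sorted_tuples 2 r)) k : 'I_#|Dpairs r|).

Definition Dmx (r : nat) : 'M[int]_(r, 'C(r, 2)) :=
  \matrix_(i < r, k < 'C(r, 2))
    (((i == tnth (Dpair k) 0)%:R : int) - ((i == tnth (Dpair k) 1)%:R : int)).

(* B'_r : rows 1,2 all ones; rows 3..r are [ -I_{r-2} | 0 ] *)
Definition Bmx (r : nat) : 'M[int]_(r, r.-1) :=
  \matrix_(i < r, j < r.-1)
    (if (i < 2)%N then 1 else if (j : nat) == (i - 2)%N then -1 else 0).

Definition Amx (r : nat) : 'M[int]_(r, r + 'C(r, 2) + r.-1) :=
  row_mx (row_mx 1%:M (Dmx r)) (Bmx r).

From mathcomp Require Import all_boot all_order all_algebra ring.
Set Implicit Arguments. Unset Strict Implicit. Unset Printing Implicit Defensive.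
Import Order.TTheory GRing.Theory Num.Theory.
Local Open Scope ring_scope.

(* Every column of A'_r has one of two shapes, writing e_a for the a-th unit
   vector and e_None for the zero vector:
   - a "difference column" e_a - e_b (the columns of I_r and of D_r), or
   - a "special column" e_0 + e_1 - e_u (the columns of B'_r), where the two
     positive entries e_0 + e_1 are the same for all special columns.
   Since a square submatrix (with distinct rows) keeps these shapes, it suffices to
   show that every square matrix of this form has |det| <= 2; repeated rows give
   det 0.  The argument, valid for all square submatrices regardless of the rank:
   1. A square matrix made of difference columns has |det| <= 1: expand along a
      column with at most one nonzero entry, or, if there is none, the all-ones
      row vector lies in the left kernel, so det = 0.
   2. Subtracting one special column from another special column turns the latter
      into the difference column e_u - e_u'; this reduces to one special column.
   3. A single special column splits as e_0 + (e_1 - e_u), so by linearity of the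
      determinant in that column, det is a sum of two determinants of step 1. *)

Definition evec (R : nzRingType) n (a : option 'I_n) (i : 'I_n) : R :=
  (Some i == a)%:R.

Section DifferenceColumns.
Variable R : numDomainType.

Lemma sum_evec n (a : option 'I_n) : \sum_i evec R a i = (a != None)%:R.
Proof.
case: a => [k|] /=; last by rewrite big1.
rewrite (bigD1 k) //= big1 ?addr0 /evec ?eqxx // => i /negbTE neq_ik.
by rewrite (inj_eq (@Some_inj _)) neq_ik.
Qed.

Lemma evec_lift n (i0 : 'I_n.+1) (a : option 'I_n.+1) (i : 'I_n) :
  evec R a (lift i0 i) = evec R (obind (unlift i0) a) i.
Proof.
rewrite /evec; case: a => [k|] //=.
case: unliftP => [k' ->|->] /=.
  by rewrite !(inj_eq (@Some_inj _)) (inj_eq (@lift_inj _ _)).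
by rewrite (inj_eq (@Some_inj _)) eq_sym (negbTE (neq_lift _ _)).
Qed.

Lemma norm_evecB_le1 n (a b : option 'I_n) i : `|evec R a i - evec R b i| <= 1.
Proof.
rewrite /evec; case: (_ == a); case: (_ == b);
  by rewrite ?subrr ?subr0 ?sub0r ?normrN ?normr1 ?normr0.
Qed.

Lemma det_diff_cols_le1 n (M : 'M[R]_n) (a b : 'I_n -> option 'I_n) :
  (forall i j, M i j = evec R (a j) i - evec R (b j) i) -> `|\det M| <= 1.
Proof.
elim: n M a b => [|n IH] M a b HM; first by rewrite det_mx00 normr1.
case: (boolP [exists j, (a j == None) || (b j == None)]) =>
    [/existsP [j a_b_None]|all_Some]; last first.
  (* the all-ones row vector is in the left kernel of M *)
  suff /det0P/eqP -> : exists2 v : 'rV[R]_n.+1, v != 0 & v *m M = 0 by rewrite normr0.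
  exists (const_mx 1).
    by apply/negP => /eqP/rowP/(_ ord0)/eqP; rewrite !mxE oner_eq0.
  apply/rowP => j; rewrite !mxE.
  under eq_bigr do rewrite mxE mul1r HM.
  rewrite sumrB !sum_evec.
  move: all_Some; rewrite negb_exists => /forallP/(_ j); rewrite negb_or.
  by case/andP=> -> ->; rewrite subrr.
have [i0 col_j_sparse] : exists i0, forall i, i != i0 -> M i j = 0.
  have sparse (c : option 'I_n.+1) : exists i0, forall i, i != i0 -> evec R c i = 0.
    case: c => [k|]; last by exists j.
    by exists k => i neq_ik; rewrite /evec (inj_eq (@Some_inj _)) (negbTE neq_ik).
  case/orP: a_b_None => /eqP c_None.
    have [i0 Hi0] := sparse (b j).
    by exists i0 => i /Hi0 e0; rewrite HM c_None e0 /evec subrr.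
  have [i0 Hi0] := sparse (a j).
  by exists i0 => i /Hi0 e0; rewrite HM c_None e0 /evec subrr.
rewrite (expand_det_col _ j) (bigD1 i0) //= big1 ?addr0; last first.
  by move=> i /col_j_sparse ->; rewrite mul0r.
rewrite normrM -[1]mul1r ler_pM // ?HM ?norm_evecB_le1 //.
rewrite /cofactor normrM normrX normrN1 expr1n mul1r.
apply: (IH _ (fun j' => obind (unlift i0) (a (lift j j')))
             (fun j' => obind (unlift i0) (b (lift j j')))).
by move=> i j'; rewrite !mxE HM !evec_lift.
Qed.

End DifferenceColumns.

Section ColumnOperations.
Variable R : comNzRingType.

Definition setcol n (M : 'M[R]_n) j (c : 'I_n -> R) : 'M[R]_n :=
  \matrix_(i, k) if k == j then c i else M i k.

Lemma det_setcolD n (M : 'M[R]_n) j (c1 c2 : 'I_n -> R) :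
  (forall i, M i j = c1 i + c2 i) ->
  \det M = \det (setcol M j c1) + \det (setcol M j c2).
Proof.
move=> col_j; rewrite -det_tr -[\det (setcol M j c1)]det_tr.
rewrite -[\det (setcol M j c2)]det_tr -[\det (setcol M j c1)^T]mul1r.
rewrite -[\det (setcol M j c2)^T]mul1r; apply: (determinant_multilinear (i0 := j)).
- by apply/rowP => k; rewrite !mxE eqxx col_j !mul1r.
- by apply/matrixP => k l; rewrite !mxE eq_sym (negbTE (neq_lift _ _)).
- by apply/matrixP => k l; rewrite !mxE eq_sym (negbTE (neq_lift _ _)).
Qed.

Lemma det_setcol_subcol n (M : 'M[R]_n) j1 j2 : j1 != j2 ->
  \det (setcol M j2 (fun i => M i j2 - M i j1)) = \det M.
Proof.
move=> neq_j12.
rewrite [RHS](@det_setcolD _ M j2 (fun i => M i j2 - M i j1) (fun i => M i j1));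
  last by move=> i; rewrite subrK.
suff -> : \det (setcol M j2 (fun i => M i j1)) = 0 by rewrite addr0.
rewrite -det_tr; apply: (determinant_alternate neq_j12) => k.
by rewrite !mxE eqxx (negbTE neq_j12).
Qed.

End ColumnOperations.

Section SpecialColumns.
Variable R : numDomainType.

Lemma det_special_cols_le2 n (M : 'M[R]_n) (p0 p1 : option 'I_n)
    (special : 'I_n -> bool) (a b u : 'I_n -> option 'I_n) :
  (forall i j, M i j = if special j then evec R p0 i + evec R p1 i - evec R (u j) i
                       else evec R (a j) i - evec R (b j) i) ->
  `|\det M| <= 2.
Proof.
have [k] := ubnP #|[set j | special j]|.
elim: k => // k IH in M special a b u *; move=> card_special HM.
case: (boolP [exists j, special j]) => [/existsP [j1 special_j1]|no_special];
  last first.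
  suff det_le1 : `|\det M| <= 1 by rewrite (le_trans det_le1) ?ler1n.
  apply: (det_diff_cols_le1 (a := a) (b := b)) => i j.
  by move: no_special; rewrite negb_exists => /forallP/(_ j)/negbTE nj; rewrite HM nj.
case: (boolP [exists j2, special j2 && (j2 != j1)]) =>
    [/existsP [j2 /andP [special_j2 neq_j21]]|only_j1].
  (* Step 2: column j2 minus column j1 is the difference column e_(u j1) - e_(u j2). *)
  have neq_j12 : j1 != j2 by rewrite eq_sym.
  rewrite -(det_setcol_subcol M neq_j12).
  apply: (IH _ (fun j => special j && (j != j2))
     (fun j => if j == j2 then u j1 else a j) (fun j => if j == j2 then u j2 else b j)
     u); last first.
    move=> i j; rewrite !mxE; case: (eqVneq j j2) => [->|_] /=; last by rewrite andbT.
    by rewrite !HM special_j1 special_j2 /=; ring.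
  rewrite (_ : [set j | _] = [set j | special j] :\ j2); last first.
    by apply/setP => j; rewrite !inE andbC.
  rewrite -ltnS (leq_trans _ card_special) //.
  by rewrite (cardsD1 j2 [set j | special j]) inE special_j2.
(* Step 3: split the only special column j1 as e_p0 + (e_p1 - e_(u j1)). *)
have specialE j : special j = (j == j1).
  case: (eqVneq j j1) => [->//|neq_j].
  by move: only_j1; rewrite negb_exists => /forallP/(_ j); rewrite neq_j andbT => /negbTE.
rewrite (@det_setcolD _ _ M j1 (fun i => evec R p0 i - evec R None i)
    (fun i => evec R p1 i - evec R (u j1) i)); last first.
  by move=> i; rewrite HM special_j1 /evec /= subr0 addrA.
rewrite (le_trans (ler_normD _ _)) // -[2]/(1 + 1) lerD //.
  apply: (det_diff_cols_le1 (a := fun j => if j == j1 then p0 else a j)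
                            (b := fun j => if j == j1 then None else b j)) => i j.
  by rewrite !mxE; case: (eqVneq j j1) => [//|neq_j]; rewrite HM specialE (negbTE neq_j).
apply: (det_diff_cols_le1 (a := fun j => if j == j1 then p1 else a j)
                          (b := fun j => if j == j1 then u j1 else b j)) => i j.
by rewrite !mxE; case: (eqVneq j j1) => [//|neq_j]; rewrite HM specialE (negbTE neq_j).
Qed.

End SpecialColumns.

Definition preim n m (f : 'I_n -> 'I_m) (a : option 'I_m) : option 'I_n :=
  obind (fun k => [pick i | f i == k]) a.

Lemma evec_preim (R : nzRingType) n m (f : 'I_n -> 'I_m) a i : injective f ->
  evec R a (f i) = evec R (preim f a) i.
Proof.
move=> f_inj; rewrite /evec /preim; case: a => [k|] //=.
case: pickP => [i' /eqP <-|none] /=.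
  by rewrite !(inj_eq (@Some_inj _)) (inj_eq f_inj).
by rewrite (inj_eq (@Some_inj _)) none.
Qed.

Lemma evec_insub (R : nzRingType) r (x : 'I_r) m : evec R (insub m) x = (val x == m)%:R.
Proof.
rewrite /evec; case: insubP => [u _ <-|/negP m_ge_r] /=.
  by rewrite (inj_eq (@Some_inj _)) (inj_eq val_inj).
by case: eqP => // x_eq; case: m_ge_r; rewrite -x_eq ltn_ord.
Qed.

Section AprimeColumns.
Variable r : nat.
Local Notation col := 'I_(r + 'C(r, 2) + r.-1).

Definition in_Bblock (k : col) : bool := if split k is inr _ then true else false.

(* Outside B'_r, column k is e_(pos_col k) - e_(neg_col k). *)
Definition pos_col (k : col) : option 'I_r :=
  if split k is inl k' then
    match split k' with inl i => Some i | inr d => Some (tnth (Dpair d) 0) end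
  else None.
Definition neg_col (k : col) : option 'I_r :=
  if split k is inl k' then
    if split k' is inr d then Some (tnth (Dpair d) 1) else None
  else None.

(* Column j of B'_r is e_0 + e_1 - e_(j+2), with e_r = 0 for the last column. *)
Definition Bneg_col (k : col) : option 'I_r :=
  if split k is inr j then insub (val j).+2 else None.

Lemma Amx_colE x k : Amx r x k =
  if in_Bblock k
  then evec int (insub 0%N) x + evec int (insub 1%N) x - evec int (Bneg_col k) x
  else evec int (pos_col k) x - evec int (neg_col k) x.
Proof.
rewrite /in_Bblock /pos_col /neg_col /Bneg_col /Amx -(splitK k).
case: (split k) => [k'|j]; rewrite unsplitK /=.
  rewrite row_mxEl -(splitK k'); case: (split k') => [i|d]; rewrite unsplitK /=.
    by rewrite row_mxEl !mxE /evec /= subr0.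
  by rewrite row_mxEr !mxE /evec.
rewrite row_mxEr !mxE !evec_insub.
case: x => [[|[|x']] Hx] /=; rewrite ?subr0 ?addr0 ?add0r //.
by rewrite !eqSS subn2 /= eq_sym; case: eqP.
Qed.

End AprimeColumns.

(* The bound |det| <= 2 holds for every square submatrix of A'_r, of any size; in
   particular for those of size rank(A'_r).  Repeated rows give det 0; otherwise the
   row selection is injective and the submatrix has the column shapes of
   det_special_cols_le2. *)
Theorem lemma3p2 (r : nat) : (2 <= r)%N -> Delta_modular 2%:Z (Amx r).
Proof.
move=> _ f g.
case: (boolP (injectiveb f)) => [/injectiveP f_inj|/injectivePn [i1 [i2 neq_i12 f_eq]]];
  last by rewrite (determinant_alternate neq_i12) ?normr0 // => j; rewrite !mxE f_eq.
apply: (det_special_cols_le2 (p0 := preim f (insub 0%N)) (p1 := preim f (insub 1%N))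
   (special := fun j => in_Bblock (g j)) (a := fun j => preim f (pos_col (g j)))
   (b := fun j => preim f (neg_col (g j))) (u := fun j => preim f (Bneg_col (g j)))).
by move=> i j; rewrite mxE Amx_colE; case: in_Bblock; rewrite !evec_preim.
Qed.
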